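(* Let $Q$ be a quiver (with no framing and arbitrary orientation) whose underlying graph is an affine Dynkin graph of type $\widetilde{D}_r$, $\widetilde{E}_6$, $\widetilde{E}_7$ or $\widetilde{E}_8$, let $\beta=(n,\dots,n)$, and put the complete standard filtration at each vertex. Then $\mathbb{C}[\mathfrak{b}^{\oplus Q_1}]^{\mathbb{U}_\beta}\cong\mathbb{C}[\mathfrak{t}^{\oplus Q_1}]$, i.e. the invariant ring is the subalgebra generated by the diagonal entries of the matrices $A_a$, $a\in Q_1$.
   Context: At each vertex put $\mathbb{C}^n$ with flag $0\subset\mathbb{C}^1\subset\cdots\subset\mathbb{C}^n$ (standard coordinate subspaces). Then the filtered representation space is $\mathfrak{b}^{\oplus Q_1}$, tuples $(A_a)_{a\in Q_1}$ of upper triangular $n\times n$ matrices. $\mathbb{U}_\beta=U^{Q_0}$, $U$ the upper unitriangular $n\times n$ matrices, acting by $(u_i)\cdot(A_a)=(u_{h(a)}A_au_{t(a)}^{-1})$ where $h,t$ are head and tail. $\mathfrak{t}$ denotes diagonal matrices. *)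

From mathcomp Require Import all_boot all_algebra.
From mathcomp Require Import complex.
From mathcomp Require Import Rstruct.
From mathcomp Require Import mpoly.
Set Implicit Arguments. Unset Strict Implicit. Unset Printing Implicit Defensive.
Import GRing.Theory.

Definition CC : Type := complex Rdefinitions.R.

(* D~_r (r >= 4), vertices 0..r: 0,1 attached to 2; chain 2 - 3 - ... - (r-2);
   r-1, r attached to r-2.  Edges listed with i < j. *)
Definition Dt_edge (r i j : nat) : bool :=
  [|| (i <= 1)%N && (j == 2),
      [&& (2 <= i)%N, j == i.+1 & (j <= r - 2)%N]
    | (i == r - 2) && ((j == r - 1) || (j == r))].
Definition Dt_adj (r : nat) (i j : nat) : bool := Dt_edge r i j || Dt_edge r j i.

Definition E6t_edge (i j : nat) : bool :=
  (i, j) \in [:: (0, 1); (1, 2); (0, 3); (3, 4); (0, 5); (5, 6)]%N.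
Definition E6t_adj (i j : nat) : bool := E6t_edge i j || E6t_edge j i.

Definition E7t_edge (i j : nat) : bool :=
  ((j == i.+1) && (j <= 6)%N) || ((i == 3) && (j == 7)).
Definition E7t_adj (i j : nat) : bool := E7t_edge i j || E7t_edge j i.

Definition E8t_edge (i j : nat) : bool :=
  ((j == i.+1) && (j <= 7)%N) || ((i == 2) && (j == 8)).
Definition E8t_adj (i j : nat) : bool := E8t_edge i j || E8t_edge j i.

(** The underlying (multi)graph of the quiver (V, E, t, h) is isomorphic to the
    simple graph on 'I_k with (symmetric, irreflexive) adjacency [adj]: there is
    a bijection on vertices such that the number of arrows between x and y
    (in either direction; loops counted once) is 1 if adjacent and 0 otherwise. *)
Definition underlying_graph_iso (V E : finType) (t h : E -> V)
    (k : nat) (adj : nat -> nat -> bool) : Prop :=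
  exists sigma : V -> 'I_k, bijective sigma /\
    forall x y : V,
      #|[pred a : E | ((t a == x) && (h a == y)) || ((t a == y) && (h a == x))]|
      = nat_of_bool (adj (sigma x) (sigma y)).

Definition affine_DE_quiver (V E : finType) (t h : E -> V) : Prop :=
  [\/ exists r : nat, (4 <= r)%N /\ underlying_graph_iso t h r.+1 (Dt_adj r),
      underlying_graph_iso t h 7 E6t_adj,
      underlying_graph_iso t h 8 E7t_adj
    | underlying_graph_iso t h 9 E8t_adj].

Local Open Scope ring_scope.

Definition upper_tri (n : nat) (A : 'M[CC]_n) : Prop :=
  forall i j : 'I_n, (j < i)%N -> A i j = 0.
Definition unitri (n : nat) (u : 'M[CC]_n) : Prop :=
  upper_tri u /\ forall i : 'I_n, u i i = 1.

(** * Coordinate ring of b^{⊕ Q_1}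
    Coordinates are the entries (a, i, j) with i <= j of the matrices A_a. *)
Definition bcoord (E : finType) (n : nat) : finType :=
  {p : E * 'I_n * 'I_n | (p.1.2 <= p.2)%N}.

Definition bdim (E : finType) (n : nat) : nat := #|bcoord E n|.

Definition bpoly (E : finType) (n : nat) := {mpoly CC[bdim E n]}.

Definition beval (E : finType) (n : nat) (f : bpoly E n) (A : E -> 'M[CC]_n) : CC :=
  f.@[fun k : 'I_(bdim E n) =>
        let p := val (enum_val k) in A p.1.1 p.1.2 p.2].

Definition Uact (V E : finType) (t h : E -> V) (n : nat)
    (u : V -> 'M[CC]_n) (A : E -> 'M[CC]_n) : E -> 'M[CC]_n :=
  fun a => u (h a) *m A a *m invmx (u (t a)).

Definition U_invariant (V E : finType) (t h : E -> V) (n : nat) (f : bpoly E n) : Prop :=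
  forall u : V -> 'M[CC]_n, (forall x, unitri (u x)) ->
  forall A : E -> 'M[CC]_n, (forall a, upper_tri (A a)) ->
    beval f (Uact t h u A) = beval f A.

Definition diag_var (E : finType) (n : nat) (p : E * 'I_n) : bpoly E n :=
  'X_(enum_rank (exist (fun q : E * 'I_n * 'I_n => (q.1.2 <= q.2)%N)
                       (p.1, p.2, p.2) (leqnn p.2))).

Definition ddim (E : finType) (n : nat) : nat := #|{: E * 'I_n}|.

Definition diag_vars (E : finType) (n : nat) : (ddim E n).-tuple (bpoly E n) :=
  [tuple diag_var (enum_val k) | k < ddim E n].

Definition in_diag_subalg (E : finType) (n : nat) (f : bpoly E n) : Prop :=
  exists g : {mpoly CC[ddim E n]}, f = comp_mpoly (diag_vars E n) g.

(* The underlying graph of an affine quiver of type D~ or E~ is a tree.  Root it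
   and walk away from the root: each arrow a joins a vertex c to its parent, and
   u_c can be solved from u_(par c) so that u_(h a) A_a u_(t a)^-1 is the diagonal
   part of A_a; the diagonals cancel, so u_c is again unitriangular.  Hence every
   tuple (A_a) with invertible diagonals lies in the U_beta-orbit of its diagonal
   part, and an invariant f agrees with f(diag A) on this Zariski-dense set, so it
   is a polynomial in the diagonal entries.  Conversely U_beta does not move
   diagonal entries. *)

From mathcomp Require Import all_boot all_algebra.
From mathcomp Require Import complex Rstruct mpoly.
From mathcomp Require Import zify.
Set Implicit Arguments. Unset Strict Implicit. Unset Printing Implicit Defensive.
Import GRing.Theory Num.Theory.
Local Open Scope ring_scope.

Local Notation widen := (widen_ord (leqnSn _)).

Section PolyVanish.
Variable R : numDomainType.

Lemma poly_eq0_of_eval (q : {poly R}) : (forall x, q.[x] = 0) -> q = 0.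
Proof.
move=> q0; apply: (@roots_geq_poly_eq0 _ q [seq i%:R | i <- iota 0 (size q)]).
- by apply/allP=> x _; apply/eqP/q0.
- by rewrite map_inj_uniq ?iota_uniq // => i j /eqP; rewrite eqr_nat => /eqP.
- by rewrite size_map size_iota.
Qed.

Section LastVariable.
Variable n : nat.
Implicit Types (p : {mpoly R[n.+1]}) (v : 'I_n -> R).

Definition mnm_init (m : 'X_{1..n.+1}) : 'X_{1..n} := [multinom m (widen i) | i < n].

Definition vext v (x : R) (i : 'I_n.+1) : R :=
  if unlift ord_max i is Some j then v j else x.

Lemma widen_lift_max (j : 'I_n) : widen j = lift ord_max j.
Proof. by apply/val_inj; rewrite /= /bump leqNgt ltn_ord. Qed.

Lemma vext_widen v x j : vext v x (widen j) = v j.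
Proof. by rewrite /vext widen_lift_max liftK. Qed.

Lemma vext_max v x : vext v x ord_max = x.
Proof. by rewrite /vext unlift_none. Qed.

Definition mspecialize p v : {poly R} :=
  \sum_(m <- msupp p) (p@_m * \prod_(i < n) v i ^+ m (widen i)) *: 'X^(m ord_max).

Definition mslice p (k : nat) : {mpoly R[n]} :=
  \sum_(m <- msupp p | m ord_max == k) p@_m *: 'X_[mnm_init m].

Lemma horner_mspecialize p v x : (mspecialize p v).[x] = p.@[vext v x].
Proof.
rewrite mevalE horner_sum; apply: eq_bigr => m _.
rewrite hornerZ hornerXn big_ord_recr /= vext_max mulrA.
by congr (_ * _ * _); apply: eq_bigr => i _; rewrite vext_widen.
Qed.

Lemma coef_mspecialize p v k : (mspecialize p v)`_k = (mslice p k).@[v].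
Proof.
rewrite coef_sum rmorph_sum [RHS]big_mkcond /=; apply: eq_bigr => m _.
rewrite coefZ coefXn eq_sym; case: eqP => _; last by rewrite mulr0.
rewrite mulr1 mevalZ mevalX; congr (_ * _).
by apply: eq_bigr => i _; rewrite mnmE.
Qed.

Lemma mnm_init_inj (m1 m2 : 'X_{1..n.+1}) :
  mnm_init m1 = mnm_init m2 -> m1 ord_max = m2 ord_max -> m1 = m2.
Proof.
move=> /mnmP e emax; apply/mnmP=> i; case: (unliftP ord_max i) => [j ->|->] //.
by have := e j; rewrite !mnmE widen_lift_max.
Qed.

Lemma mcoeff_mslice p m : (mslice p (m ord_max))@_(mnm_init m) = p@_m.
Proof.
have term (m' : 'X_{1..n.+1}) :
    (if m' ord_max == m ord_max then (p@_m' *: 'X_[mnm_init m'])@_(mnm_init m) else 0)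
    = p@_m' * (m' == m)%:R.
  rewrite mcoeffZ mcoeffX; have [->|ne] := eqVneq m' m; first by rewrite !eqxx.
  rewrite mulr0; case: ifP => // /eqP emax.
  by case: eqP => [e|]; [case/eqP: ne; apply: mnm_init_inj | rewrite mulr0].
rewrite /mslice raddf_sum big_mkcond /=; under eq_bigr => m' _ do rewrite term.
have [mp|mNp] := boolP (m \in msupp p); last first.
  rewrite memN_msupp_eq0 // big1 // => m' _.
  by have [->|] := eqVneq m' m; rewrite ?mulr0 // memN_msupp_eq0 // mul0r.
rewrite (bigD1_seq m) ?msupp_uniq //= eqxx mulr1 big1 ?addr0 // => m' /negbTE ->.
by rewrite mulr0.
Qed.
End LastVariable.

Lemma mpoly_eq0_of_eval n (p : {mpoly R[n]}) : (forall v, p.@[v] = 0) -> p = 0.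
Proof.
elim: n p => [|n IH] p p0.
  rewrite [p]nvar0_mpolyC; have := p0 (fun _ => 0).
  by rewrite [p in p.@[_]]nvar0_mpolyC mevalC => ->.
have slice0 k : mslice p k = 0.
  apply: IH => v; rewrite -coef_mspecialize (@poly_eq0_of_eval (mspecialize p v)) ?coef0 //.
  by move=> x; rewrite horner_mspecialize.
by apply/mpolyP=> m; rewrite -mcoeff_mslice slice0 !mcoeff0.
Qed.

Lemma mpoly_eq_off_zeros n (P p q : {mpoly R[n]}) :
  P != 0 -> (forall v, P.@[v] != 0 -> p.@[v] = q.@[v]) -> p = q.
Proof.
move=> P0 pq; apply/eqP; rewrite -subr_eq0.
suff /eqP : (p - q) * P = 0 by rewrite mulf_eq0 (negbTE P0) orbF.
apply: mpoly_eq0_of_eval => v; rewrite mevalM mevalB.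
by have [->|/pq ->] := eqVneq P.@[v] 0; rewrite ?mulr0 ?subrr ?mul0r.
Qed.
End PolyVanish.

Section TrigMx.
Variable n : nat.

Lemma mul_trig_mx (R : pzRingType) (A B : 'M[R]_n) :
  is_trig_mx A -> is_trig_mx B -> is_trig_mx (A *m B).
Proof.
move=> /is_trig_mxP tA /is_trig_mxP tB; apply/is_trig_mxP=> i j lt_ij.
rewrite mxE big1 // => k _; have [lt_ik|le_ki] := ltnP i k; first by rewrite tA ?mul0r.
by rewrite tB ?mulr0 // (leq_ltn_trans le_ki).
Qed.

Lemma mul_trig_mx_diag (R : pzRingType) (A B : 'M[R]_n) i :
  is_trig_mx A -> is_trig_mx B -> (A *m B) i i = A i i * B i i.
Proof.
move=> /is_trig_mxP tA /is_trig_mxP tB; rewrite mxE (bigD1 i) //= big1 ?addr0 // => k.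
by case: (ltngtP i k) => [/tA->|/tB->|/val_inj->]; rewrite ?mulr0 ?mul0r ?eqxx.
Qed.

Variable F : fieldType.
Implicit Type A : 'M[F]_n.

Lemma trig_mx_unit A : is_trig_mx A -> (forall i, A i i != 0) -> A \in unitmx.
Proof. by move=> tA nzA; rewrite unitmxE det_trig // unitfE; apply/prodf_neq0. Qed.

Lemma invmx_trig A : is_trig_mx A -> (forall i, A i i != 0) -> is_trig_mx (invmx A).
Proof.
move=> tA nzA; have AV := mulmxV (trig_mx_unit tA nzA).
apply/is_trig_mxP=> i j; have [m] := ubnP i; elim: m i => // m IH i /ltnSE le_im lt_ij.
have /matrixP/(_ i j)/eqP := AV; rewrite !mxE (bigD1 i) //= big1 ?addr0.
  by rewrite -val_eqE (ltn_eqF lt_ij) mulf_eq0 (negbTE (nzA i)) => /eqP.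
move=> k; case: (ltngtP k i) => [lt_ki|lt_ik|/val_inj->]; last by rewrite eqxx.
  by rewrite IH ?mulr0 ?(leq_trans lt_ki le_im) ?(ltn_trans lt_ki lt_ij).
by rewrite (is_trig_mxP tA) ?mul0r.
Qed.

Lemma invmx_trig_diag A i :
  is_trig_mx A -> (forall i, A i i != 0) -> invmx A i i = (A i i)^-1.
Proof.
move=> tA nzA; apply: (mulIf (nzA i)); rewrite mulVf //.
by rewrite -mul_trig_mx_diag ?invmx_trig // mulVmx ?trig_mx_unit // mxE eqxx.
Qed.
End TrigMx.

Section UpperTriangular.
Variable n : nat.
Implicit Types A B C u w : 'M[CC]_n.

Lemma upper_tri_trmx A : upper_tri A <-> is_trig_mx A^T.
Proof.
split=> [uA|/is_trig_mxP tA i j lt_ji]; first by apply/is_trig_mxP=> i j lt; rewrite mxE uA.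
by have := tA j i lt_ji; rewrite mxE.
Qed.

Lemma upper_tri_mul A B : upper_tri A -> upper_tri B -> upper_tri (A *m B).
Proof. by rewrite !upper_tri_trmx trmx_mul => uA uB; apply: mul_trig_mx. Qed.

Lemma upper_tri_mul_diag A B i :
  upper_tri A -> upper_tri B -> (A *m B) i i = A i i * B i i.
Proof.
move=> /upper_tri_trmx uA /upper_tri_trmx uB.
by have := mul_trig_mx_diag i uB uA; rewrite -trmx_mul ![_^T _ _]mxE mulrC.
Qed.

Lemma upper_tri_inv A : upper_tri A -> (forall i, A i i != 0) -> upper_tri (invmx A).
Proof.
rewrite !upper_tri_trmx trmx_inv => uA nzA; apply: invmx_trig => // i.
by rewrite mxE.
Qed.

Lemma upper_tri_inv_diag A i :
  upper_tri A -> (forall i, A i i != 0) -> invmx A i i = (A i i)^-1.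
Proof.
move=> /upper_tri_trmx uA nzA; have nzAT j : A^T j j != 0 by rewrite mxE.
by have := invmx_trig_diag i uA nzAT; rewrite -trmx_inv !mxE.
Qed.

Lemma upper_tri_unit A : upper_tri A -> (forall i, A i i != 0) -> A \in unitmx.
Proof.
by rewrite -unitmx_tr => /upper_tri_trmx uA nzA; apply: trig_mx_unit => // i; rewrite mxE.
Qed.

Lemma upper_tri_conj_diag B A C i :
    upper_tri B -> upper_tri A -> upper_tri C -> (forall i, C i i != 0) ->
  (B *m A *m invmx C) i i = B i i * A i i / C i i.
Proof.
move=> uB uA uC nzC; have uBA := upper_tri_mul uB uA; have uCi := upper_tri_inv uC nzC.
by rewrite upper_tri_mul_diag // upper_tri_mul_diag // upper_tri_inv_diag.
Qed.

Lemma unitri_unit u : unitri u -> u \in unitmx.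
Proof. by case=> uu du; apply: upper_tri_unit => // i; rewrite du oner_neq0. Qed.

Lemma unitri1 : unitri (1%:M : 'M[CC]_n).
Proof.
split=> [i j lt_ji|i]; last by rewrite mxE eqxx.
by rewrite mxE -val_eqE gtn_eqF.
Qed.

Lemma unitri_conj B C w :
    upper_tri B -> upper_tri C -> (forall i, C i i != 0) -> (forall i, B i i = C i i) ->
  unitri w -> unitri (B *m w *m invmx C).
Proof.
move=> uB uC nzC eBC [uw dw]; split.
  by apply: upper_tri_mul; [apply: upper_tri_mul | apply: upper_tri_inv].
by move=> i; rewrite upper_tri_conj_diag // dw mulr1 eBC mulfV.
Qed.
End UpperTriangular.

Definition diag_part (R : pzRingType) n (A : 'M[R]_n) : 'M[R]_n := diag_mx (\row_i A i i).

Lemma diag_part_upper n (A : 'M[CC]_n) : upper_tri (diag_part A).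
Proof. by move=> i j lt_ji; rewrite !mxE -val_eqE gtn_eqF ?mulr0n. Qed.

Lemma diag_part_diag (R : pzRingType) n (A : 'M[R]_n) i : diag_part A i i = A i i.
Proof. by rewrite !mxE eqxx mulr1n. Qed.

Definition joins (V E : finType) (t h : E -> V) (a : E) (x y : V) : bool :=
  ((t a == x) && (h a == y)) || ((t a == y) && (h a == x)).

Definition arrows_in_rooted_tree (V E : finType) (t h : E -> V)
    (root : V) (par : V -> V) (depth : V -> nat) : Prop :=
  [/\ forall v, v != root -> depth v = (depth (par v)).+1,
      forall a, exists2 c, c != root & joins t h a c (par c)
    & forall c a b, c != root -> joins t h a c (par c) -> joins t h b c (par c) -> a = b].

Section Gauge.
Variables (V E : finType) (t h : E -> V) (root : V) (par : V -> V) (depth : V -> nat).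
Hypothesis tree : arrows_in_rooted_tree t h root par depth.
Variables (n : nat) (A : E -> 'M[CC]_n).
Hypotheses (A_upper : forall a, upper_tri (A a)) (A_diag : forall a i, A a i i != 0).

(* The choice making [gauge (h a) *m A a *m invmx (gauge (t a))] the diagonal
   part of [A a] for the arrow [a] between [c] and its parent. *)
Definition gauge_step (c : V) (w : 'M[CC]_n) : 'M[CC]_n :=
  if [pick a | joins t h a c (par c)] is Some a then
    if h a == c then diag_part (A a) *m w *m invmx (A a)
    else invmx (diag_part (A a)) *m w *m A a
  else w.

Fixpoint gauge_rec (k : nat) (v : V) : 'M[CC]_n :=
  if k is k'.+1 then (if v == root then 1%:M else gauge_step v (gauge_rec k' (par v)))
  else 1%:M.

Definition gauge (v : V) : 'M[CC]_n := gauge_rec (depth v) v.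

Lemma gauge_root : gauge root = 1%:M.
Proof. by rewrite /gauge; case: (depth root) => //= k; rewrite eqxx. Qed.

Lemma gauge_par v : v != root -> gauge v = gauge_step v (gauge (par v)).
Proof. by case: tree => depth_par _ _ nv; rewrite /gauge depth_par //= (negbTE nv). Qed.

Lemma par_neq v : v != root -> par v != v.
Proof.
case: tree => depth_par _ _ nv; apply/eqP=> pv.
by have := depth_par v nv; rewrite pv => /n_Sn.
Qed.

Lemma diag_part_nz a i : diag_part (A a) i i != 0.
Proof. by rewrite diag_part_diag. Qed.

Lemma gauge_step_unitri c w : unitri w -> unitri (gauge_step c w).
Proof.
rewrite /gauge_step; case: pickP => // a _ uw; case: ifP => _.
  apply: unitri_conj => //; [exact: diag_part_upper | by move=> i; rewrite diag_part_diag].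
rewrite -[X in _ *m X]invmxK; apply: unitri_conj => //.
- exact: upper_tri_inv (diag_part_upper _) (diag_part_nz a).
- exact: upper_tri_inv.
- by move=> i; rewrite upper_tri_inv_diag // invr_eq0.
- move=> i; rewrite !upper_tri_inv_diag ?diag_part_diag //.
  + exact: diag_part_upper.
  + exact: diag_part_nz.
Qed.

Lemma gauge_unitri v : unitri (gauge v).
Proof.
case: tree => depth_par _ _; have [k] := ubnP (depth v); elim: k v => // k IH v lt_vk.
have [->|nv] := eqVneq v root; first by rewrite gauge_root; apply: unitri1.
by rewrite gauge_par //; apply/gauge_step_unitri/IH; move: lt_vk; rewrite depth_par.
Qed.

Lemma gauge_diagonalizes a : Uact t h gauge A a = diag_part (A a).
Proof.
case: tree => _ /(_ a)[c nc ac] uniq_arrow.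
have gauge_c : gauge c = if h a == c then diag_part (A a) *m gauge (par c) *m invmx (A a)
                         else invmx (diag_part (A a)) *m gauge (par c) *m A a.
  rewrite gauge_par // /gauge_step; case: pickP => [b bc|/(_ a)]; last by rewrite ac.
  by rewrite (uniq_arrow c b a).
have Au := upper_tri_unit (A_upper a) (A_diag a).
have Du := upper_tri_unit (diag_part_upper (A a)) (diag_part_nz a).
have Pu := unitri_unit (gauge_unitri (par c)).
rewrite /Uact; case/orP: ac => /andP[/eqP ta /eqP ha]; rewrite ha ta gauge_c ha.
  rewrite (negbTE (par_neq nc)); set Y := invmx _ *m _ *m _.
  have Yu : Y \in unitmx by rewrite !unitmx_mul unitmx_inv Du Pu Au.
  have -> : gauge (par c) *m A a = diag_part (A a) *m Y.
    by rewrite /Y !mulmxA mulmxV // mul1mx.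
  by rewrite mulmxK.
by rewrite eqxx mulmxKV // mulmxK.
Qed.
End Gauge.

Section GraphIso.
Variables (V E : finType) (t h : E -> V) (k : nat) (adj : nat -> nat -> bool).
Variable sigma : V -> 'I_k.
Hypothesis arrow_count : forall x y, #|[pred a | joins t h a x y]| = adj (sigma x) (sigma y).

Lemma joins_adj a x y : joins t h a x y -> adj (sigma x) (sigma y).
Proof.
move=> axy; have := arrow_count x y; case: adj => //.
by move/card0_eq/(_ a); rewrite !inE axy.
Qed.

Lemma joins_uniq a b x y : joins t h a x y -> joins t h b x y -> a = b.
Proof.
have /card_le1_eqP le1 : (#|[pred a | joins t h a x y]| <= 1)%N by rewrite arrow_count; case: adj.
by move=> ax bx; apply: le1.
Qed.
End GraphIso.

Definition tree_certificate (k : nat) (adj : nat -> nat -> bool) (root : nat)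
    (par depth : nat -> nat) : Prop :=
  [/\ (root < k)%N,
      forall i, (i < k)%N -> i != root -> (par i < k)%N /\ depth i = (depth (par i)).+1
    & forall i j, (i < k)%N -> (j < k)%N -> adj i j ->
        ((i != root) && (j == par i)) || ((j != root) && (i == par j))].

Lemma rooted_tree_of_certificate (V E : finType) (t h : E -> V) k adj root par depth :
    underlying_graph_iso t h k adj -> tree_certificate k adj root par depth ->
  exists root' par' depth', arrows_in_rooted_tree t h root' par' depth'.
Proof.
case=> sigma [[g sigmaK gK] count] [root_lt cert_par cert_adj].
pose r0 : 'I_k := Ordinal root_lt.
pose parV v := g (insubd r0 (par (sigma v))).
have rootV v : (v != g r0) = (sigma v != root :> nat).
  by rewrite -(inj_eq (can_inj sigmaK)) gK -val_eqE.
have sigma_par v : v != g r0 -> sigma (parV v) = par (sigma v) :> nat.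
  by rewrite rootV => nv; rewrite gK val_insubd; case: (cert_par _ (ltn_ord _) nv) => ->.
have parVE v w : v != g r0 -> sigma w = par (sigma v) :> nat -> w = parV v.
  by move=> nv e; apply: (can_inj sigmaK); apply/val_inj; rewrite /= sigma_par.
exists (g r0), parV, (fun v => depth (sigma v)); split.
- move=> v nv; rewrite sigma_par //.
  by move: nv; rewrite rootV => /(cert_par _ (ltn_ord _))[].
- move=> a; have /joins_adj : joins t h a (t a) (h a) by rewrite /joins !eqxx.
  move=> /(_ _ _ _ count) /(cert_adj _ _ (ltn_ord _) (ltn_ord _)).
  case/orP=> /andP[nr /eqP e]; rewrite -rootV in nr.
    by exists (t a) => //; rewrite -(parVE _ _ nr e) /joins !eqxx.
  by exists (h a) => //; rewrite -(parVE _ _ nr e) /joins !eqxx orbT.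
- by move=> c a b _; apply: (joins_uniq count).
Qed.

Definition tree_certificateb (k : nat) (adj : nat -> nat -> bool) (root : nat)
    (par depth : nat -> nat) : bool :=
  [&& (root < k)%N,
      all (fun i => (i != root) ==> (par i < k)%N && (depth i == (depth (par i)).+1)) (iota 0 k)
    & all (fun i => all (fun j => adj i j ==>
        ((i != root) && (j == par i)) || ((j != root) && (i == par j))) (iota 0 k)) (iota 0 k)].

Lemma tree_certificateP k adj root par depth :
  tree_certificateb k adj root par depth -> tree_certificate k adj root par depth.
Proof.
have mem_k i : (i < k)%N -> i \in iota 0 k by rewrite mem_iota.
case/and3P=> root_lt /allP cert_par /allP cert_adj; split=> // [i ik nr | i j ik jk].
  by have /implyP/(_ nr)/andP[-> /eqP] := cert_par i (mem_k i ik).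
by have /allP/(_ j (mem_k j jk))/implyP := cert_adj i (mem_k i ik).
Qed.

Definition Dt_par (r i : nat) : nat :=
  (if i <= 1 then 2 else if i <= r - 2 then i.-1 else r - 2)%N.
Definition Dt_depth (r i : nat) : nat :=
  (if i <= 1 then 1 else if i <= r - 2 then i - 2 else r - 3)%N.

Lemma Dt_tree_certificate r : (4 <= r)%N -> tree_certificate r.+1 (Dt_adj r) 2 (Dt_par r) (Dt_depth r).
Proof.
move=> r4; split=> [|i ir nr|i j ir jr]; first lia;
  rewrite /Dt_par /Dt_depth ?/Dt_adj ?/Dt_edge; by repeat case: ifP => ?; lia.
Qed.

Definition E6t_par (i : nat) : nat := match i with 2 => 1 | 4 => 3 | 6 => 5 | _ => 0 end.
Definition E6t_depth (i : nat) : nat := match i with 0 => 0 | 1 | 3 | 5 => 1 | _ => 2 end.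
Definition E7t_par (i : nat) : nat := if i == 7 then 3 else i.-1.
Definition E7t_depth (i : nat) : nat := if i == 7 then 4 else i.
Definition E8t_par (i : nat) : nat := if i == 8 then 2 else i.-1.
Definition E8t_depth (i : nat) : nat := if i == 8 then 3 else i.

Lemma affine_DE_rooted_tree (V E : finType) (t h : E -> V) :
  affine_DE_quiver t h -> exists root par depth, arrows_in_rooted_tree t h root par depth.
Proof.
case=> [[r [r4 iso]]|iso|iso|iso]; apply: (rooted_tree_of_certificate iso).
- exact: Dt_tree_certificate.
- by apply: (@tree_certificateP _ _ 0 E6t_par E6t_depth).
- by apply: (@tree_certificateP _ _ 0 E7t_par E7t_depth).
- by apply: (@tree_certificateP _ _ 0 E8t_par E8t_depth).
Qed.

Section Coordinates.
Variables (E : finType) (n : nat).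
Implicit Types (f : bpoly E n) (A : E -> 'M[CC]_n) (x : 'I_(bdim E n) -> CC).

Lemma eq_beval f A B : A =1 B -> beval f A = beval f B.
Proof. by move=> eAB; apply: meval_eq => k; rewrite /= eAB. Qed.

Lemma beval_diag_vars (g : {mpoly CC[ddim E n]}) A :
  beval (comp_mpoly (diag_vars E n) g) A = g.@[fun k => A (enum_val k).1 (enum_val k).2 (enum_val k).2].
Proof.
rewrite /beval comp_mpoly_meval; apply: meval_eq => k.
by rewrite tnth_mktuple /diag_var mevalXU enum_rankK.
Qed.

Definition bmx x (a : E) : 'M[CC]_n :=
  \matrix_(i, j) if insub (a, i, j) is Some q then x (enum_rank q) else 0.

Lemma beval_bmx f x : beval f (bmx x) = f.@[x].
Proof.
apply: meval_eq => k /=; rewrite mxE.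
by rewrite -!surjective_pairing valK enum_valK.
Qed.

Lemma bmx_upper x a : upper_tri (bmx x a).
Proof. by move=> i j lt_ji; rewrite mxE insubN // -ltnNge. Qed.

Lemma bmx_diag x a i : bmx x a i i = (diag_var (a, i)).@[x].
Proof.
rewrite mxE mevalXU; case: insubP => [q _ vq|]; last by rewrite /= leqnn.
by congr (x (enum_rank _)); apply/val_inj.
Qed.

(* The substitution x_(a,i,j) |-> [i == j] y_(a,i), dual to A |-> diag_part A. *)
Definition diag_restrict : (bdim E n).-tuple {mpoly CC[ddim E n]} :=
  [tuple let p := val (enum_val k) in
         if p.1.2 == p.2 then 'X_(enum_rank p.1) else 0 | k < bdim E n].

Lemma beval_diag_restrict f A :
  beval (comp_mpoly (diag_vars E n) (comp_mpoly diag_restrict f)) A =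
  beval f (fun a => diag_part (A a)).
Proof.
rewrite beval_diag_vars comp_mpoly_meval; apply: meval_eq => k.
rewrite tnth_mktuple /diag_part !mxE; case: eqP => [e|_]; last by rewrite meval0 mulr0n.
by rewrite mevalXU enum_rankK e mulr1n.
Qed.
End Coordinates.

Lemma diag_subalg_invariant (V E : finType) (t h : E -> V) n (f : bpoly E n) :
  in_diag_subalg f -> U_invariant t h f.
Proof.
case=> g ->{f} u uu A uA; rewrite !beval_diag_vars; apply: meval_eq => k /=.
set a := (enum_val k).1; set i := (enum_val k).2.
have nz j : u (t a) j j != 0 by rewrite (uu (t a)).2 oner_neq0.
rewrite /Uact upper_tri_conj_diag //; [|exact: (uu _).1|exact: (uu _).1].
by rewrite (uu (h a)).2 (uu (t a)).2 mul1r invr1 mulr1.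
Qed.

Lemma invariant_in_diag_subalg (V E : finType) (t h : E -> V) root par depth n (f : bpoly E n) :
  arrows_in_rooted_tree t h root par depth -> U_invariant t h f -> in_diag_subalg f.
Proof.
move=> tree f_inv; exists (comp_mpoly (diag_restrict E n) f).
apply: (@mpoly_eq_off_zeros _ _ (\prod_p diag_var p)) => [|x].
  apply/eqP=> /(congr1 (meval (fun _ => 1))); rewrite rmorph_prod meval0 big1 => [/eqP|p _].
    by rewrite oner_eq0.
  by rewrite /= mevalXU.
rewrite rmorph_prod /= => /prodf_neq0 diag_nz.
have bmx_nz a i : bmx x a i i != 0 by rewrite bmx_diag (diag_nz (a, i)).
rewrite -[LHS]beval_bmx -[RHS]beval_bmx beval_diag_restrict.
rewrite -(f_inv _ (gauge_unitri tree (bmx_upper x) bmx_nz) _ (bmx_upper x)).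
by apply: eq_beval => a; apply: (gauge_diagonalizes tree (bmx_upper x) bmx_nz).
Qed.


Theorem mainTheorem3 (V E : finType) (t h : E -> V) (n : nat) :
  affine_DE_quiver t h ->
  forall f : bpoly E n, U_invariant t h f <-> in_diag_subalg f.
Proof.
move=> /affine_DE_rooted_tree [root [par [depth tree]]] f; split.
  exact: invariant_in_diag_subalg tree.
exact: diag_subalg_invariant.
Qed.
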